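(* In the setting described in the context, suppose $\mathrm{ev}$ is multiplicative and the functor $\mathcal{U}$ is strong symmetric monoidal (property (M)). Then: (1) for all objects $W,W'$ the composition map $\circ\colon\operatorname{Hom}_{\mathcal{P}^1}(\emptyset,W')\otimes\operatorname{Hom}_{\mathcal{P}^1}(W,\emptyset)\to\operatorname{Hom}_{\mathcal{P}^1}(W,W')$ is surjective (property (M')), $I_1(W,W')=I_2(W,W')$, and hence the quotient functor $\mathcal{P}^1\to\mathcal{P}^2$ is an isomorphism of $\Bbbk$-linear categories; (2) the ideal $I:=I_1=I_2$ is monoidal, i.e. $\Sigma\sqcup\Theta\in I(V\sqcup W,V'\sqcup W')$ whenever $\Sigma\in I(V,V')$ and $\Theta\in\operatorname{Hom}_{\mathcal{P}}(W,W')$, so the symmetric monoidal structure of $\mathcal{P}$ descends to $\mathcal{P}^1$, and the functor $\operatorname{Hom}_{\mathcal{P}^1}(\emptyset,-)\colon\mathcal{P}^1\to\Bbbk\text{-mod}$ is strong symmetric monoidal.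
   Context: Setting. Let $\Bbbk$ be a commutative ring. Let $\mathcal{P}$ be a small $\Bbbk$-linear (strict) symmetric monoidal category with monoidal product $\sqcup$ and unit object $\emptyset$, in which every object $W$ has a chosen dual $W^r$, giving the standard identifications $\operatorname{Hom}(W_1,W_2)\cong\operatorname{Hom}(\emptyset,W_2\sqcup W_1^r)\cong\operatorname{Hom}(W_1\sqcup W_2^r,\emptyset)\cong\operatorname{Hom}(W_2^r,W_1^r)$. (In the paper $\mathcal{P}$ is the category of closed $\mathcal{C}$-labeled webs and prefoams.) Let $\mathrm{tr}_W$ be the categorical trace and $\mathrm{ev}\colon\operatorname{End}_{\mathcal{P}}(\emptyset)\to\Bbbk$ a $\Bbbk$-linear map; it is multiplicative if $\mathrm{ev}(\mathrm{id}_\emptyset)=1$ and $\mathrm{ev}(\Sigma_1\sqcup\Sigma_2)=\mathrm{ev}(\Sigma_1)\mathrm{ev}(\Sigma_2)$. Define $I_1(W,W')\subseteq\operatorname{Hom}(W,W')$ as the set of $\Sigma$ with $\mathrm{ev}(\mathrm{tr}_W(\Sigma'\circ\Sigma))=0$ for all $\Sigma'\in\operatorname{Hom}(W',W)$, and $I_2(W,W')$ as the set of $\Sigma$ with $\mathrm{ev}(\Sigma''\circ\Sigma\circ\Sigma')=0$ for all $\Sigma'\in\operatorname{Hom}(\emptyset,W)$, $\Sigma''\in\operatorname{Hom}(W',\emptyset)$; these are ideals with $I_1\subseteq I_2$. Let $\pi\colon\mathcal{P}\to\mathcal{P}^1:=\mathcal{P}/I_1$, $\mathcal{P}^2:=\mathcal{P}/I_2$,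 and $\mathcal{U}:=\operatorname{Hom}_{\mathcal{P}^1}(\emptyset,-)\circ\pi\colon\mathcal{P}\to\Bbbk\text{-mod}$, which (for multiplicative $\mathrm{ev}$) is lax symmetric monoidal via the maps $\mathcal{U}(W)\otimes\mathcal{U}(V)\to\mathcal{U}(W\sqcup V)$ induced by $\sqcup$; strong means these maps and the unit map $\Bbbk\to\mathcal{U}(\emptyset)$ are isomorphisms. *)

From HB Require Import structures.
From mathcomp Require Import all_boot all_order all_algebra.
Set Implicit Arguments. Unset Strict Implicit. Unset Printing Implicit Defensive.
Import GRing.Theory.
Local Open Scope ring_scope.

(* Data of a small k-linear strict symmetric monoidal category with   *)
(* chosen (right) duals.  Strictness is encoded by Leibniz equalities  *)
(* of objects; morphisms are transported along them with [castH].     *)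
Record SMCData (R : comPzRingType) := {
  Ob : Type;
  unitO : Ob;
  tensO : Ob -> Ob -> Ob;
  dualO : Ob -> Ob;
  tensA : forall a b c, tensO (tensO a b) c = tensO a (tensO b c);
  tens1l : forall a, tensO unitO a = a;
  tens1r : forall a, tensO a unitO = a;
  Mor : Ob -> Ob -> lmodType R;
  comp : forall a b c, Mor b c -> Mor a b -> Mor a c;
  idm : forall a, Mor a a;
  tensH : forall a b c d, Mor a b -> Mor c d -> Mor (tensO a c) (tensO b d);
  braid : forall a b, Mor (tensO a b) (tensO b a);
  coev : forall a, Mor unitO (tensO a (dualO a));
  evm : forall a, Mor (tensO (dualO a) a) unitO
}.

Arguments Ob {R}.
Arguments unitO {R C} : rename.
Arguments tensO {R C} : rename.
Arguments dualO {R C} : rename.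
Arguments tensA {R C} : rename.
Arguments tens1l {R C} : rename.
Arguments tens1r {R C} : rename.
Arguments Mor {R C} : rename.
Arguments comp {R C a b c} : rename.
Arguments idm {R C} : rename.
Arguments tensH {R C a b c d} : rename.
Arguments braid {R C} : rename.
Arguments coev {R C} : rename.
Arguments evm {R C} : rename.

Section Defs.
Variables (R : comPzRingType) (C : SMCData R).
Implicit Types (a b c d e f : Ob C).

Definition castH (a a' b b' : Ob C) (e1 : a = a') (e2 : b = b') (f : Mor a b)
  : Mor a' b' :=
  match e1 in _ = x, e2 in _ = y return Mor x y with
  | erefl, erefl => f end.

Definition is_SMC : Prop :=
  (forall a b c d (h : Mor c d) (g : Mor b c) (f : Mor a b),
      comp h (comp g f) = comp (comp h g) f) /\
  (forall a b (f : Mor a b), comp (idm b) f = f) /\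
  (forall a b (f : Mor a b), comp f (idm a) = f) /\
  (forall a b c (k : R) (g g' : Mor b c) (f : Mor a b),
      comp (k *: g + g') f = k *: comp g f + comp g' f) /\
  (forall a b c (k : R) (g : Mor b c) (f f' : Mor a b),
      comp g (k *: f + f') = k *: comp g f + comp g f') /\
  (forall a b, tensH (idm a) (idm b) = idm (tensO a b)) /\
  (forall a b c a' b' c' (g : Mor b c) (f : Mor a b) (g' : Mor b' c') (f' : Mor a' b'),
      tensH (comp g f) (comp g' f') = comp (tensH g g') (tensH f f')) /\
  (forall a b c d (k : R) (f f' : Mor a b) (g : Mor c d),
      tensH (k *: f + f') g = k *: tensH f g + tensH f' g) /\
  (forall a b c d (k : R) (f : Mor a b) (g g' : Mor c d),
      tensH f (k *: g + g') = k *: tensH f g + tensH f g') /\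
  (forall a b c d e f (x : Mor a b) (y : Mor c d) (z : Mor e f),
      castH (tensA a c e) (tensA b d f) (tensH (tensH x y) z)
      = tensH x (tensH y z)) /\
  (forall a b (x : Mor a b), castH (tens1l a) (tens1l b) (tensH (idm unitO) x) = x) /\
  (forall a b (x : Mor a b), castH (tens1r a) (tens1r b) (tensH x (idm unitO)) = x) /\
  (forall a b c d (f : Mor a b) (g : Mor c d),
      comp (braid b d) (tensH f g) = comp (tensH g f) (braid a c)) /\
  (forall a b, comp (braid b a) (braid a b) = idm (tensO a b)) /\
  (forall a b c,
      braid a (tensO b c)
      = castH erefl (esym (tensA b c a))
          (comp (tensH (idm b) (braid a c))
                (castH (tensA a b c) (tensA b a c) (tensH (braid a b) (idm c))))) /\
  (forall a,
      castH (tens1l a) (tens1r a)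
        (comp (tensH (idm a) (evm a))
              (castH erefl (tensA a (dualO a) a) (tensH (coev a) (idm a))))
      = idm a) /\
  (forall a,
      castH (tens1r (dualO a)) (tens1l (dualO a))
        (comp (tensH (evm a) (idm (dualO a)))
              (castH erefl (esym (tensA (dualO a) a (dualO a)))
                     (tensH (idm (dualO a)) (coev a))))
      = idm (dualO a)).

Definition trace (W : Ob C) (f : Mor W W) : Mor unitO unitO :=
  comp (evm W) (comp (braid W (dualO W)) (comp (tensH f (idm (dualO W))) (coev W))).

Variable ev : Mor (@unitO R C) unitO -> R.

Definition ev_linear : Prop :=
  forall (k : R) (x y : Mor unitO unitO), ev (k *: x + y) = k * ev x + ev y.

Definition ev_multiplicative : Prop :=
  ev (idm unitO) = 1 /\
  forall s1 s2 : Mor unitO unitO,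
    ev (castH (tens1l unitO) (tens1l unitO) (tensH s1 s2)) = ev s1 * ev s2.

Definition I1 (W W' : Ob C) (S : Mor W W') : Prop :=
  forall S' : Mor W' W, ev (trace (comp S' S)) = 0.

Definition I2 (W W' : Ob C) (S : Mor W W') : Prop :=
  forall (S' : Mor unitO W) (S'' : Mor W' unitO), ev (comp S'' (comp S S')) = 0.

(* the lax structure map of U on representatives:
   [a] ⊗ [b] |-> [a ⊔ b]  (using ∅ ⊔ ∅ = ∅) *)
Definition laxU (W V : Ob C) (a : Mor unitO W) (b : Mor unitO V) : Mor unitO (tensO W V) :=
  castH (tens1l unitO) erefl (tensH a b).

(* μ_{W,V} : U(W) ⊗ U(V) -> U(W ⊔ V) is an isomorphism.  Since U(X) is
   Mor(∅,X)/I_1(∅,X), this says: (U(W⊔V), [a]⊗[b] |-> [a⊔b]) satisfies the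
   universal property of the tensor product U(W) ⊗_k U(V). *)
Definition laxU_iso (W V : Ob C) : Prop :=
  forall (M : lmodType R) (phi : Mor unitO W -> Mor unitO V -> M),
    (forall k x x' y, phi (k *: x + x') y = k *: phi x y + phi x' y) ->
    (forall k x y y', phi x (k *: y + y') = k *: phi x y + phi x y') ->
    (forall x y, I1 x -> phi x y = 0) ->
    (forall x y, I1 y -> phi x y = 0) ->
    exists psi : Mor unitO (tensO W V) -> M,
      [/\ (forall k z z', psi (k *: z + z') = k *: psi z + psi z'),
          (forall z, I1 z -> psi z = 0),
          (forall x y, psi (laxU x y) = phi x y) &
          (forall psi' : Mor unitO (tensO W V) -> M,
             (forall k z z', psi' (k *: z + z') = k *: psi' z + psi' z') ->
             (forall z, I1 z -> psi' z = 0) ->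
             (forall x y, psi' (laxU x y) = phi x y) ->
             forall z, psi' z = psi z)].

(* the unit map k -> U(∅), c |-> [c · id_∅], is an isomorphism *)
Definition unitU_iso : Prop :=
  (forall s : Mor unitO unitO, exists c : R, I1 (s - c *: idm unitO)) /\
  (forall c : R, I1 (c *: idm (@unitO R C)) -> c = 0).

Definition U_strong : Prop := unitU_iso /\ forall W V : Ob C, laxU_iso W V.

Definition propM' : Prop :=
  forall (W W' : Ob C) (S : Mor W W'),
    exists (n : nat) (a : 'I_n -> Mor unitO W') (b : 'I_n -> Mor W unitO),
      I1 (S - \sum_(i < n) comp (a i) (b i)).

End Defs.

From Pilot Require Import Defs.
From HB Require Import structures.
From mathcomp Require Import all_boot all_order all_algebra.
From Stdlib Require Import ProofIrrelevance ClassicalEpsilon.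
From Stdlib Require Import FunctionalExtensionality PropExtensionality.
Set Implicit Arguments. Unset Strict Implicit. Unset Printing Implicit Defensive.
Import GRing.Theory.
Local Open Scope ring_scope.

(* Strong monoidality of U, through the uniqueness in the universal property of
   U(X) ⊗ U(Y) applied to the quotient by the span of the tensor products, says that every
   vector z : ∅ → X ⊔ Y is a sum of tensor products a ⊔ b modulo I_1.  Applied to the name
   (S ⊔ id) ∘ coev_W of a morphism S : W → W' and bent back, this writes
   S = Σ a_i ∘ b_i + unbend u with u negligible (ev (Y ∘ u) = 0 for all Y).  Morphisms
   A ∘ (u ⊔ id) ∘ B with u negligible lie in I_1 because their traces factor through u;
   this gives (M').  With tr (x ∘ g) = g ∘ x for x : ∅ → W, g : W → ∅ it reduces I_2 ⊆ I_1
   to the rank-one terms a_i ∘ b_i, and I_1 is monoidal because S ⊔ T can be tested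
   against sums of vectors a ⊔ b. *)

Section QuotientModule.
Variables (R : pzRingType) (V : lmodType R) (P : V -> Prop).
Hypothesis P0 : P 0.
Hypothesis P_linear : forall k x y, P x -> P y -> P (k *: x + y).

Let PD x y : P x -> P y -> P (x + y).
Proof. by move=> Px Py; have := P_linear 1 Px Py; rewrite scale1r. Qed.
Let PZ k x : P x -> P (k *: x).
Proof. by move=> Px; have := P_linear k Px P0; rewrite addr0. Qed.
Let PN x : P x -> P (- x).
Proof. by move=> Px; rewrite -scaleN1r; apply: PZ. Qed.

(* A chosen representative of the coset x + P; the elements of V / P are the fixed points
   of [qrepr]. *)
Definition qrepr (x : V) : V := epsilon (inhabits 0) (fun y => P (y - x)).

Lemma qreprP x : P (qrepr x - x).
Proof.
apply: (epsilon_spec (inhabits 0) (fun y => P (y - x))).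
by exists x; rewrite subrr.
Qed.

Lemma qrepr_eq x y : P (x - y) -> qrepr x = qrepr y.
Proof.
move=> Pxy; rewrite /qrepr; congr epsilon; apply: functional_extensionality => z.
apply: propositional_extensionality; split=> Pz.
- by rewrite -(subrKA x); apply: PD.
- by rewrite -(subrKA y) -[y - x]opprB; apply: PD => //; apply: PN.
Qed.

Lemma qrepr_id x : qrepr (qrepr x) = qrepr x.
Proof. exact/qrepr_eq/qreprP. Qed.

Definition quot := {x : V | qrepr x == x}.
HB.instance Definition _ := Choice.on quot.

Definition qclass (x : V) : quot := exist _ (qrepr x) (introT eqP (qrepr_id x)).

Lemma qclass_val (a : quot) : qclass (val a) = a.
Proof. by apply: val_inj => /=; apply/eqP/(valP a). Qed.

Lemma qclass_eq x y : P (x - y) -> qclass x = qclass y.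
Proof. by move=> Pxy; apply: val_inj => /=; apply: qrepr_eq. Qed.

Lemma qclass_eqP x y : qclass x = qclass y -> P (x - y).
Proof.
move=> /(congr1 val) /= exy; have := PD (PN (qreprP x)) (qreprP y).
by rewrite exy opprB addrA subrK.
Qed.

Lemma qclassDl x y : qclass (val (qclass x) + y) = qclass (x + y).
Proof. by apply: qclass_eq; rewrite opprD addrACA subrr addr0; apply: qreprP. Qed.

Lemma qclassDr x y : qclass (y + val (qclass x)) = qclass (y + x).
Proof. by rewrite addrC qclassDl addrC. Qed.

Lemma qclassZ k x : qclass (k *: val (qclass x)) = qclass (k *: x).
Proof. by apply: qclass_eq; rewrite -scalerBr; apply/PZ/qreprP. Qed.

Definition qadd (a b : quot) := qclass (val a + val b).
Definition qopp (a : quot) := qclass (- val a).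
Definition qscale k (a : quot) := qclass (k *: val a).

Lemma qaddA : associative qadd.
Proof. by move=> a b c; rewrite /qadd qclassDl qclassDr addrA. Qed.
Lemma qaddC : commutative qadd.
Proof. by move=> a b; rewrite /qadd addrC. Qed.
Lemma qadd0 : left_id (qclass 0) qadd.
Proof. by move=> a; rewrite /qadd qclassDl add0r qclass_val. Qed.
Lemma qaddN : left_inverse (qclass 0) qopp qadd.
Proof. by move=> a; rewrite /qadd /qopp qclassDl addNr. Qed.

HB.instance Definition _ := GRing.isZmodule.Build quot qaddA qaddC qadd0 qaddN.

Lemma qscaleA a b v : qscale a (qscale b v) = qscale (a * b) v.
Proof. by rewrite /qscale qclassZ scalerA. Qed.
Lemma qscale1 : left_id 1 qscale.
Proof. by move=> v; rewrite /qscale scale1r qclass_val. Qed.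
Lemma qscaleDr : right_distributive qscale +%R.
Proof.
move=> a u v; rewrite [LHS]/qscale -[u + v]/(qadd u v) /qadd.
by rewrite qclassZ scalerDr -qclassDl -qclassDr.
Qed.
Lemma qscaleDl v : {morph qscale^~ v : a b / a + b}.
Proof. by move=> a b; rewrite /qscale scalerDl -qclassDl -qclassDr. Qed.

HB.instance Definition _ := GRing.Zmodule_isLmodule.Build R quot qscaleA qscale1 qscaleDr qscaleDl.

Lemma qclass_linear : linear qclass.
Proof.
move=> k x y; change (qclass (k *: x + y) = qadd (qscale k (qclass x)) (qclass y)).
rewrite /qadd /qscale qclassDl qclassDr; apply: qclass_eq.
by rewrite opprD addrACA subrr addr0 -scalerBr -opprB; apply/PZ/PN/qreprP.
Qed.

Lemma qclass_eq0 x : qclass x = 0 <-> P x.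
Proof.
split=> [/qclass_eqP|Px]; first by rewrite subr0.
by apply: qclass_eq; rewrite subr0.
Qed.

Lemma exists_linear_kernel :
  exists (M : lmodType R) (q : V -> M), linear q /\ forall x, q x = 0 <-> P x.
Proof. by exists quot, qclass; split; [apply: qclass_linear | apply: qclass_eq0]. Qed.

End QuotientModule.

Section LinearFor.
Variables (R : pzRingType) (U : lmodType R) (V : zmodType) (s : GRing.Scale.law R V).
Variables (f : U -> V) (f_linear : linear_for s f).
Let Lf : {linear U -> V | s} := HB.pack f (GRing.isLinear.Build R U V s f f_linear).
Lemma linear_for0 : f 0 = 0. Proof. exact: (linear0 Lf). Qed.
Lemma linear_forD x y : f (x + y) = f x + f y. Proof. exact: (linearD Lf). Qed.
Lemma linear_forB x y : f (x - y) = f x - f y. Proof. exact: (linearB Lf). Qed.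
Lemma linear_forZ k x : f (k *: x) = s k (f x). Proof. exact: (linearZ_LR Lf). Qed.
Lemma linear_for_sum I (r : seq I) (F : I -> U) : f (\sum_(i <- r) F i) = \sum_(i <- r) f (F i).
Proof. exact: (linear_sum Lf). Qed.
End LinearFor.

Notation "g ⊙ f" := (Defs.comp g f) (at level 60, right associativity).
Notation "f ⊗ g" := (tensH f g) (at level 40, left associativity).

Section StrictSymmetricMonoidal.
Variables (R : comPzRingType) (C : SMCData R).
Hypothesis HC : is_SMC C.
Implicit Types (a b c d : Ob C).
Local Notation "∅" := (@unitO R C).

Lemma compA a b c d (h : Mor c d) (g : Mor b c) (f : Mor a b) : (h ⊙ g) ⊙ f = h ⊙ g ⊙ f.
Proof. by have [->] := HC. Qed.
Lemma comp1m a b (f : Mor a b) : idm b ⊙ f = f.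
Proof. by have [_ [->]] := HC. Qed.
Lemma compm1 a b (f : Mor a b) : f ⊙ idm a = f.
Proof. by have [_ [_ [->]]] := HC. Qed.
Lemma compDl a b c (k : R) (g g' : Mor b c) (f : Mor a b) :
  (k *: g + g') ⊙ f = k *: (g ⊙ f) + (g' ⊙ f).
Proof. by have [_ [_ [_ [->]]]] := HC. Qed.
Lemma compDr a b c (k : R) (g : Mor b c) (f f' : Mor a b) :
  g ⊙ (k *: f + f') = k *: (g ⊙ f) + (g ⊙ f').
Proof. by have [_ [_ [_ [_ [->]]]]] := HC. Qed.
Lemma tens_id a b : idm a ⊗ idm b = idm (tensO a b).
Proof. by have [_ [_ [_ [_ [_ [->]]]]]] := HC. Qed.
Lemma tens_comp a b c a' b' c' (g : Mor b c) (f : Mor a b) (g' : Mor b' c') (f' : Mor a' b') :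
  (g ⊙ f) ⊗ (g' ⊙ f') = (g ⊗ g') ⊙ (f ⊗ f').
Proof. by have [_ [_ [_ [_ [_ [_ [->]]]]]]] := HC. Qed.
Lemma tensDl a b c d (k : R) (f f' : Mor a b) (g : Mor c d) :
  (k *: f + f') ⊗ g = k *: (f ⊗ g) + f' ⊗ g.
Proof. by have [_ [_ [_ [_ [_ [_ [_ [->]]]]]]]] := HC. Qed.
Lemma tensA_cast a b c d e f (x : Mor a b) (y : Mor c d) (z : Mor e f) :
  castH (tensA a c e) (tensA b d f) (x ⊗ y ⊗ z) = x ⊗ (y ⊗ z).
Proof. by have [_ [_ [_ [_ [_ [_ [_ [_ [_ [->]]]]]]]]]] := HC. Qed.
Lemma tens1l_cast a b (x : Mor a b) : castH (tens1l a) (tens1l b) (idm ∅ ⊗ x) = x.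
Proof. by have [_ [_ [_ [_ [_ [_ [_ [_ [_ [_ [->]]]]]]]]]]] := HC. Qed.
Lemma tens1r_cast a b (x : Mor a b) : castH (tens1r a) (tens1r b) (x ⊗ idm ∅) = x.
Proof. by have [_ [_ [_ [_ [_ [_ [_ [_ [_ [_ [_ [->]]]]]]]]]]]] := HC. Qed.
Lemma braid_natural a b c d (f : Mor a b) (g : Mor c d) :
  braid b d ⊙ (f ⊗ g) = (g ⊗ f) ⊙ braid a c.
Proof. by have [_ [_ [_ [_ [_ [_ [_ [_ [_ [_ [_ [_ [->]]]]]]]]]]]]] := HC. Qed.
Lemma braidK a b : braid b a ⊙ braid a b = idm (tensO a b).
Proof. by have [_ [_ [_ [_ [_ [_ [_ [_ [_ [_ [_ [_ [_ [->]]]]]]]]]]]]]] := HC. Qed.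
Lemma braid_hexagon a b c :
  braid a (tensO b c) = castH erefl (esym (tensA b c a))
    ((idm b ⊗ braid a c) ⊙ castH (tensA a b c) (tensA b a c) (braid a b ⊗ idm c)).
Proof. by have [_ [_ [_ [_ [_ [_ [_ [_ [_ [_ [_ [_ [_ [_ [->]]]]]]]]]]]]]]] := HC. Qed.
Lemma zigzag a :
  castH (tens1l a) (tens1r a)
    ((idm a ⊗ evm a) ⊙ castH erefl (tensA a (dualO a) a) (coev a ⊗ idm a)) = idm a.
Proof. by have [_ [_ [_ [_ [_ [_ [_ [_ [_ [_ [_ [_ [_ [_ [_ [->]]]]]]]]]]]]]]]] := HC. Qed.

Lemma comp_linearl {a b c} (f : Mor a b) : linear (fun g : Mor b c => g ⊙ f).
Proof. by move=> k g g'; apply: compDl. Qed.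

Lemma comp_linearr {a b c} (g : Mor b c) : linear (fun f : Mor a b => g ⊙ f).
Proof. by move=> k f f'; apply: compDr. Qed.

Definition idcast a b (e : a = b) : Mor a b := castH erefl e (idm a).

Lemma castE a a' b b' (e1 : a = a') (e2 : b = b') (f : Mor a b) :
  castH e1 e2 f = idcast e2 ⊙ f ⊙ idcast (esym e1).
Proof. by destruct e1, e2; rewrite /idcast /= comp1m compm1. Qed.

Lemma idcast_irr a b (e e' : a = b) : idcast e = idcast e'.
Proof. by rewrite (proof_irrelevance _ e e'). Qed.

Lemma idcast_id a (e : a = a) : idcast e = idm a.
Proof. by rewrite (proof_irrelevance _ e erefl). Qed.

Lemma idcast_comp a b c (e1 : a = b) (e2 : b = c) :
  idcast e2 ⊙ idcast e1 = idcast (etrans e1 e2).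
Proof. by destruct e1, e2; rewrite /idcast /= comp1m. Qed.

Lemma idcast_compA a b c d (e1 : a = b) (e2 : b = c) (f : Mor d a) :
  idcast e2 ⊙ idcast e1 ⊙ f = idcast (etrans e1 e2) ⊙ f.
Proof. by rewrite -compA idcast_comp. Qed.

Ltac idcast_norm :=
  repeat progress rewrite ?compA ?idcast_compA ?idcast_comp ?idcast_id ?comp1m ?compm1.
Ltac idcast_norm_in H :=
  repeat progress rewrite ?compA ?idcast_compA ?idcast_comp ?idcast_id ?comp1m ?compm1 in H.
Ltac idcast_refl := repeat f_equal; apply: proof_irrelevance.

Lemma idcast_cancel x y z w (f g : Mor x y) (e1 e3 : y = z) (e2 e4 : w = x) :
  idcast e1 ⊙ f ⊙ idcast e2 = idcast e3 ⊙ g ⊙ idcast e4 -> f = g.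
Proof.
rewrite (idcast_irr e3 e1) (idcast_irr e4 e2).
move=> /(congr1 (fun h => idcast (esym e1) ⊙ h ⊙ idcast (esym e2))).
by idcast_norm.
Qed.

Lemma idcast_cancel_id x z (f : Mor x x) (e1 : x = z) (e2 : z = x) :
  idcast e1 ⊙ f ⊙ idcast e2 = idm z -> f = idm x.
Proof.
move=> H; apply: (@idcast_cancel _ _ _ _ _ _ e1 e1 e2 e2).
by rewrite H comp1m idcast_comp idcast_id.
Qed.

Lemma idcast_cancelr x y w (f g : Mor x y) (e2 e4 : w = x) :
  f ⊙ idcast e2 = g ⊙ idcast e4 -> f = g.
Proof.
move=> H; apply: (@idcast_cancel _ _ _ _ _ _ erefl erefl e2 e4).
by rewrite !idcast_id !comp1m H.
Qed.

Lemma tensA_natural a b c d e f (x : Mor a b) (y : Mor c d) (z : Mor e f) :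
  idcast (tensA b d f) ⊙ (x ⊗ y ⊗ z) = (x ⊗ (y ⊗ z)) ⊙ idcast (tensA a c e).
Proof. by rewrite -tensA_cast castE !compA idcast_comp idcast_id compm1. Qed.

Lemma tensAE a b c d e f (x : Mor a b) (y : Mor c d) (z : Mor e f) :
  x ⊗ y ⊗ z = idcast (esym (tensA b d f)) ⊙ (x ⊗ (y ⊗ z)) ⊙ idcast (tensA a c e).
Proof. by rewrite -tensA_natural idcast_compA idcast_id comp1m. Qed.

Lemma tens1lE a b (x : Mor a b) :
  idm ∅ ⊗ x = idcast (esym (tens1l b)) ⊙ x ⊙ idcast (tens1l a).
Proof. by rewrite -{2}(tens1l_cast x) castE; idcast_norm. Qed.

Lemma tens1rE a b (x : Mor a b) :
  x ⊗ idm ∅ = idcast (esym (tens1r b)) ⊙ x ⊙ idcast (tens1r a).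
Proof. by rewrite -{2}(tens1r_cast x) castE; idcast_norm. Qed.

Lemma tens1l_natural a b (x : Mor a b) :
  idcast (esym (tens1l b)) ⊙ x = (idm ∅ ⊗ x) ⊙ idcast (esym (tens1l a)).
Proof. by rewrite tens1lE; idcast_norm. Qed.

Lemma tens_comp_chain a b c a' b' c' e (g : Mor b c) (f : Mor a b) (g' : Mor b' c')
    (f' : Mor a' b') (r : Mor e (tensO a a')) :
  (g ⊗ g') ⊙ (f ⊗ f') ⊙ r = ((g ⊙ f) ⊗ (g' ⊙ f')) ⊙ r.
Proof. by rewrite tens_comp compA. Qed.

Lemma tens1r_natural_chain a b e (x : Mor a b) (r : Mor e (tensO a ∅)) :
  x ⊙ idcast (tens1r a) ⊙ r = idcast (tens1r b) ⊙ (x ⊗ idm ∅) ⊙ r.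
Proof. by rewrite tens1rE; idcast_norm. Qed.

Lemma tensA_natural_chain a b c d e f g (x : Mor a b) (y : Mor c d) (z : Mor e f)
    (r : Mor g (tensO (tensO a c) e)) :
  idcast (tensA b d f) ⊙ (x ⊗ y ⊗ z) ⊙ r = (x ⊗ (y ⊗ z)) ⊙ idcast (tensA a c e) ⊙ r.
Proof. by rewrite -compA tensA_natural compA. Qed.

Lemma tens_comp_idr a b c d (g : Mor b c) (f : Mor a b) :
  (g ⊙ f) ⊗ idm d = (g ⊗ idm d) ⊙ (f ⊗ idm d).
Proof. by rewrite -{1}(comp1m (idm d)) tens_comp. Qed.

Lemma tens_splitl a b c d (f : Mor a b) (g : Mor c d) : f ⊗ g = (idm b ⊗ g) ⊙ (f ⊗ idm c).
Proof. by rewrite -tens_comp comp1m compm1. Qed.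

Lemma tens_splitr a b c d (f : Mor a b) (g : Mor c d) : f ⊗ g = (f ⊗ idm d) ⊙ (idm a ⊗ g).
Proof. by rewrite -tens_comp comp1m compm1. Qed.

Lemma braid_idcast a u v (e : u = v) :
  braid a u = idcast (f_equal (fun y => tensO y a) (esym e)) ⊙ braid a v
                ⊙ idcast (f_equal (tensO a) e).
Proof. by destruct e; rewrite !idcast_id comp1m compm1. Qed.

(* In the hexagon for (a, ∅, ∅) the component t of the braiding β_{a,∅} is idempotent;
   involutivity of the braiding makes it invertible, hence t = id. *)
Lemma braid_unitr a : braid a ∅ = idcast (etrans (tens1r a) (esym (tens1l a))).
Proof.
have [t Et] : {t : Mor a a | braid a ∅ = idcast (esym (tens1l a)) ⊙ t ⊙ idcast (tens1r a)}.
  by exists (idcast (tens1l a) ⊙ braid a ∅ ⊙ idcast (esym (tens1r a))); idcast_norm.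
have hex := braid_hexagon a ∅ ∅.
rewrite !castE tens1lE tens1rE (braid_idcast a (tens1l ∅)) Et in hex.
idcast_norm_in hex.
have t_idem : t = t ⊙ t by rewrite -[t ⊙ t ⊙ _]compA in hex; apply: (idcast_cancel hex).
have [t' Et'] : {t' : Mor a a | braid ∅ a = idcast (esym (tens1r a)) ⊙ t' ⊙ idcast (tens1l a)}.
  by exists (idcast (tens1r a) ⊙ braid ∅ a ⊙ idcast (esym (tens1l a))); idcast_norm.
have inv := braidK a ∅; rewrite Et' Et in inv; idcast_norm_in inv.
have t'_t : t' ⊙ t = idm a by rewrite -[t' ⊙ t ⊙ _]compA in inv; apply: idcast_cancel_id inv.
have t_id : t = idm a by rewrite -t'_t {2}t_idem -compA t'_t comp1m.
by rewrite Et t_id; idcast_norm; apply: idcast_irr.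
Qed.

Lemma braid_unitl a : braid ∅ a = idcast (etrans (tens1l a) (esym (tens1r a))).
Proof.
have inv := braidK a ∅; rewrite braid_unitr in inv.
apply: (@idcast_cancelr _ _ _ _ _ (etrans (tens1r a) (esym (tens1l a)))
                                  (etrans (tens1r a) (esym (tens1l a)))).
by rewrite inv; idcast_norm.
Qed.

Lemma trace_linear W : linear (@trace R C W).
Proof. by move=> k f g; rewrite /trace tensDl !compDl !compDr. Qed.

Lemma trace_comp_unit W (x : Mor ∅ W) (g : Mor W ∅) : trace (x ⊙ g) = g ⊙ x.
Proof.
rewrite /trace tens_comp_idr; idcast_norm.
rewrite -[braid _ _ ⊙ (x ⊗ _) ⊙ _]compA braid_natural braid_unitl; idcast_norm.
rewrite -{2}(comp1m x) -(zigzag W) !castE; idcast_norm.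
rewrite tens1r_natural_chain tens_comp_chain comp1m compm1.
rewrite [idcast (etrans (esym (tens1l W)) _)](idcast_irr _ (esym (tens1l W))).
rewrite tens1l_natural tens_comp_chain comp1m compm1.
rewrite (tens_splitl (coev W) x) -[idm (tensO W (dualO W))]tens_id compA.
rewrite tensA_natural_chain tens_comp_chain compm1.
rewrite [in RHS](tens_splitl g) [in RHS]tens1lE; idcast_norm.
rewrite -[idm (tensO (dualO W) ∅)]tens_id -tensA_natural_chain [in RHS]tens_comp_chain.
rewrite comp1m [in RHS]tens1rE; idcast_norm.
by idcast_refl.
Qed.

Lemma trace_unit (s : Mor ∅ ∅) : trace s = s.
Proof. by rewrite -{1}(comp1m s) trace_comp_unit compm1. Qed.

Lemma trace_tens_vector X V W (u : Mor ∅ X) (A : Mor (tensO X V) W) (B : Mor W (tensO ∅ V)) :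
  exists Y : Mor X ∅, trace (A ⊙ (u ⊗ idm V) ⊙ B) = Y ⊙ u.
Proof.
rewrite /trace !tens_comp_idr; idcast_norm.
rewrite (tensAE u) tens_id; idcast_norm.
set q := idcast (tensA ∅ V (dualO W)) ⊙ (B ⊗ idm (dualO W)) ⊙ coev W.
have -> : q = idcast (esym (tens1l _)) ⊙ (idcast (tens1l _) ⊙ q).
  by rewrite idcast_compA idcast_id comp1m.
rewrite tens1l_natural tens_comp_chain compm1 comp1m (tens_splitl u) tens1rE; idcast_norm.
by rewrite -!compA; eexists.
Qed.

Lemma comp_tens_vector X V (u : Mor ∅ X) (A : Mor (tensO X V) ∅) (B : Mor ∅ (tensO ∅ V)) :
  exists Y : Mor X ∅, A ⊙ (u ⊗ idm V) ⊙ B = Y ⊙ u.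
Proof. by have [Y EY] := trace_tens_vector u A B; exists Y; rewrite -EY trace_unit. Qed.

(* [unbend u] is (id ⊔ ev_W) ∘ (u ⊔ id_W): the inverse of the duality isomorphism
   Hom(W, W') ≅ Hom(∅, W' ⊔ W^r), S ↦ (S ⊔ id) ∘ coev_W. *)
Definition unbend W W' (u : Mor ∅ (tensO W' (dualO W))) : Mor W W' :=
  idcast (tens1r W') ⊙ (idm W' ⊗ evm W) ⊙ idcast (tensA W' (dualO W) W) ⊙ (u ⊗ idm W)
    ⊙ idcast (esym (tens1l W)).

Lemma unbend_linear W W' : linear (@unbend W W').
Proof. by move=> k u u'; rewrite /unbend tensDl !compDl !compDr. Qed.

Lemma unbend_natural W X W' (g : Mor X W') (v : Mor ∅ (tensO X (dualO W))) :
  unbend ((g ⊗ idm (dualO W)) ⊙ v) = g ⊙ unbend v.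
Proof.
rewrite /unbend tens_comp_idr; idcast_norm.
rewrite tensA_natural_chain tens_id tens_comp_chain comp1m compm1 tens_splitr compA.
by rewrite tens1r_natural_chain; idcast_norm.
Qed.

Lemma unbend_coev W : unbend (coev W) = idm W.
Proof. by rewrite -[RHS](zigzag W) !castE /unbend; idcast_norm; idcast_refl. Qed.

Section Evaluation.
Variable ev : Mor ∅ ∅ -> R.
Hypothesis ev_lin : ev_linear ev.
Hypothesis laxU_univ : forall W V : Ob C, laxU_iso ev W V.

Lemma I1_linear W W' k (S T : Mor W W') : I1 ev S -> I1 ev T -> I1 ev (k *: S + T).
Proof.
move=> IS IT S'.
by rewrite compDr (@trace_linear W) ev_lin IS IT mulr0 addr0.
Qed.

Lemma I1_0 W W' : I1 ev (0 : Mor W W').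
Proof.
move=> S'.
by rewrite (linear_for0 (comp_linearr S')) (linear_for0 (@trace_linear W)) (linear_for0 ev_lin).
Qed.

Definition negligible X (u : Mor ∅ X) := forall Y : Mor X ∅, ev (Y ⊙ u) = 0.

Lemma I1_negligible X (u : Mor ∅ X) : I1 ev u -> negligible u.
Proof. by move=> Iu Y; rewrite -(trace_unit (Y ⊙ u)); apply: Iu. Qed.

Lemma negligible_tens_I1 X V W W' (u : Mor ∅ X) (A : Mor (tensO X V) W')
    (B : Mor W (tensO ∅ V)) :
  negligible u -> I1 ev (A ⊙ (u ⊗ idm V) ⊙ B).
Proof.
move=> Nu S'; rewrite -[S' ⊙ A ⊙ _]compA.
by have [Y ->] := trace_tens_vector u (S' ⊙ A) B; apply: Nu.
Qed.

Lemma laxU_linearl {X Y} (y : Mor ∅ Y) : linear (fun x : Mor ∅ X => laxU x y).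
Proof. by move=> k x x'; rewrite /laxU !castE tensDl compDl compDr. Qed.

Lemma laxU_span X Y (z : Mor ∅ (tensO X Y)) :
  exists s : seq (Mor ∅ X * Mor ∅ Y), I1 ev (z - \sum_(p <- s) laxU p.1 p.2).
Proof.
pose P z := exists s : seq (Mor ∅ X * Mor ∅ Y), I1 ev (z - \sum_(p <- s) laxU p.1 p.2).
have P0 : P 0 by exists [::]; rewrite big_nil subr0; apply: I1_0.
have P_linear k x y : P x -> P y -> P (k *: x + y).
  move=> [s Is] [s' Is']; exists ([seq (k *: p.1, p.2) | p <- s] ++ s').
  rewrite big_cat big_map /=.
  under eq_bigr do rewrite (linear_forZ (laxU_linearl _)) /=.
  rewrite -scaler_sumr opprD addrACA -scalerBr.
  exact: I1_linear.
have [M [q [q_lin q0]]] := exists_linear_kernel P0 P_linear.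
have [|||| psi [_ _ _ psi_unique]] := @laxU_univ X Y M (fun _ _ => 0);
  try by move=> *; rewrite ?scaler0 ?addr0.
have q_psi : forall w, q w = psi w.
  apply: psi_unique => [//|w Iw|x y]; apply/q0.
  - by exists [::]; rewrite big_nil subr0.
  - by exists [:: (x, y)]; rewrite big_seq1 subrr; apply: I1_0.
have zero_psi : forall w, 0 = psi w by apply: psi_unique => // *; rewrite scaler0 addr0.
by apply/q0; rewrite q_psi -zero_psi.
Qed.

Lemma unbend_laxU W W' (a : Mor ∅ W') (c : Mor ∅ (dualO W)) :
  unbend (laxU a c) = a ⊙ unbend (laxU (idm ∅) c).
Proof.
rewrite -unbend_natural; congr unbend; rewrite /laxU !castE; idcast_norm.
by rewrite tens_comp_chain compm1 comp1m.
Qed.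

Lemma decompose_mod_negligible W W' (S : Mor W W') :
  exists (s : seq (Mor ∅ W' * Mor W ∅)) (u : Mor ∅ (tensO W' (dualO W))),
    negligible u /\ S = \sum_(p <- s) (p.1 ⊙ p.2) + unbend u.
Proof.
have [s Is] := laxU_span ((S ⊗ idm (dualO W)) ⊙ coev W).
exists [seq (p.1, unbend (laxU (idm ∅) p.2)) | p <- s].
exists (((S ⊗ idm _) ⊙ coev W) - \sum_(p <- s) laxU p.1 p.2).
split; first exact: I1_negligible.
rewrite (linear_forB (@unbend_linear W W')) (linear_for_sum (@unbend_linear W W')).
rewrite unbend_natural unbend_coev compm1 big_map /=.
by rewrite [X in _ - X](eq_bigr _ (fun p _ => unbend_laxU p.1 p.2)) addrC subrK.
Qed.

Lemma unbend_comp_I1 V W W' (u : Mor ∅ (tensO W' (dualO W))) (B : Mor V W) :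
  negligible u -> I1 ev (unbend u ⊙ B).
Proof.
move=> Nu; have := negligible_tens_I1
  (idcast (tens1r W') ⊙ (idm W' ⊗ evm W) ⊙ idcast (tensA W' (dualO W) W))
  (idcast (esym (tens1l W)) ⊙ B) Nu.
by rewrite /unbend !compA.
Qed.

Lemma propM'_holds : propM' ev.
Proof.
move=> W W' S; have [s [u [Nu ->]]] := decompose_mod_negligible S.
pose p0 := (0 : Mor ∅ W', 0 : Mor W ∅).
exists (size s), (fun i => (nth p0 s i).1), (fun i => (nth p0 s i).2).
have -> : \sum_(i < size s) ((nth p0 s i).1 ⊙ (nth p0 s i).2) = \sum_(p <- s) (p.1 ⊙ p.2).
  by rewrite (big_nth p0) big_mkord.
by rewrite addrC addKr -[unbend u]compm1; apply: unbend_comp_I1.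
Qed.

Lemma I1_I2 W W' (S : Mor W W') : I1 ev S -> I2 ev S.
Proof. by move=> IS S' S''; have := IS (S' ⊙ S''); rewrite compA trace_comp_unit compA. Qed.

Lemma I2_I1 W W' (S : Mor W W') : I2 ev S -> I1 ev S.
Proof.
move=> I2S S'; have [s [u [Nu ->]]] := decompose_mod_negligible S'.
rewrite (linear_forD (comp_linearl S)) (linear_forD (@trace_linear W)) (linear_forD ev_lin).
rewrite (linear_for_sum (comp_linearl S)) (linear_for_sum (@trace_linear W)).
rewrite (linear_for_sum ev_lin) big1 ?add0r => [|p _]; last first.
  by rewrite compA trace_comp_unit compA; apply: I2S.
by have := unbend_comp_I1 S Nu (idm W); rewrite comp1m.
Qed.

Lemma tens_laxU X X' Y Y' (f : Mor X X') (g : Mor Y Y') (a : Mor ∅ X) (b : Mor ∅ Y) :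
  (f ⊗ g) ⊙ laxU a b = laxU (f ⊙ a) (g ⊙ b).
Proof. by rewrite /laxU !castE; idcast_norm; rewrite tens_comp_chain. Qed.

Lemma laxU_factorl X Y (A : Mor (tensO X Y) ∅) (a : Mor ∅ X) (b : Mor ∅ Y) :
  exists Z : Mor X ∅, A ⊙ laxU a b = Z ⊙ a.
Proof.
rewrite /laxU castE idcast_id comp1m tens_splitr compA.
exact: comp_tens_vector.
Qed.

Lemma I1_tens V V' W W' (S : Mor V V') (T : Mor W W') : I1 ev S -> I1 ev (S ⊗ T).
Proof.
move=> /I1_I2 I2S; apply: I2_I1 => x y.
have [s Is] := laxU_span x; set r := x - _ in Is.
have -> : x = r + \sum_(p <- s) laxU p.1 p.2 by rewrite subrK.
rewrite (linear_forD (comp_linearr (S ⊗ T))) (linear_forD (comp_linearr y)).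
rewrite (linear_forD ev_lin) (linear_for_sum (comp_linearr (S ⊗ T))).
rewrite (linear_for_sum (comp_linearr y)) (linear_for_sum ev_lin) big1 ?addr0.
  by rewrite -compA; apply: (I1_negligible Is).
move=> p _; rewrite tens_laxU.
by have [Z ->] := laxU_factorl y (S ⊙ p.1) (T ⊙ p.2); apply: I2S.
Qed.

End Evaluation.

End StrictSymmetricMonoidal.

Theorem mainTheorem5 (R : comPzRingType) (C : SMCData R)
  (HC : is_SMC C) (ev : Mor (@unitO R C) unitO -> R)
  (Hlin : ev_linear ev) (Hmult : ev_multiplicative ev)
  (HM : U_strong ev) :
  propM' ev /\
  (forall (W W' : Ob C) (S : Mor W W'), I1 ev S <-> I2 ev S) /\
  (forall (V V' W W' : Ob C) (S : Mor V V') (T : Mor W W'),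
      I1 ev S -> I1 ev (tensH S T)) /\
  U_strong ev.
Proof.
have [_ laxU_univ] := HM.
split; first exact: propM'_holds.
split; first by move=> W W' S; split; [apply: I1_I2 | apply: I2_I1].
by split=> // V V' W W' S T; apply: I1_tens.
Qed.
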